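(* Let $c$ be a correct client following the client protocol described in the context, and let $o$ and $o'$ be two operations (each a \textsc{get} or a \textsc{put}) issued by $c$, with $o$ issued before $o'$. Then $\mathrm{ts}(o') \ge \mathrm{ts}(o)$.
   Context: Client model. A client $c$ has a physical clock whose reading $\mathsf{clock}_c$ is a positive real number that is strictly increasing in real time. The client keeps two variables, a dependency time $\mathsf{dt}_c$ and a common global stable time $\mathsf{cgst}_c$, both initially $0$; they are modified only as described below. A correct client issues its operations one at a time: an operation is issued only after the previous one has returned. Servers are grouped into partitions of $3f+1$ replicas each, and a quorum is a set of $2f+1$ replicas of one partition. \textsc{get}$(k)$: the client sets $ts \gets \max\{\mathsf{dt}_c, \mathsf{cgst}_c\}$ and sends a request carrying $ts$ to the replicas of the partition holding $k$. It then waits for replies from a quorum $Q$, each reply from replica $i\in Q$ carrying a value $v_i$ and a number $cgst_i$, sets $\mathsf{cgst}_c \gets \max\{\mathsf{cgst}_c, \min_{i\in Q} cgst_i\}$, and returns a value. \textsc{put}$(k,v)$: the client waits until $\mathsf{clock}_c > \mathsf{cgst}_c$, then sends a request carrying $(k, v, cl, c)$, where $cl$ is the current reading of $\mathsf{clock}_c$, to the replicas of the partition holding $k$. It then waits for replies from a quorum $Q$, each reply from $i\in Q$ carrying a number $cgst_i$, sets $\mathsf{cgst}_c \gets \max\{\mathsf{cgst}_c, \min_{i\in Q} cgst_i\}$, then sets $\mathsf{dt}_c$ to the current reading of $\mathsf{clock}_c$, and returns. Timestamps: for a \textsc{get} operation $o$, $\mathrm{ts}(o)$ is the value $ts=\max\{\mathsf{dt}_c,\mathsf{cgst}_c\}$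 computed when $o$ is issued; for a \textsc{put} operation $o$, $\mathrm{ts}(o)$ is the clock value $cl$ sent in its request. *)

From mathcomp Require Import all_boot all_order all_algebra.
From mathcomp Require Import reals.
Set Implicit Arguments. Unset Strict Implicit. Unset Printing Implicit Defensive.
Import Order.TTheory GRing.Theory Num.Theory.
Local Open Scope ring_scope.

Inductive op_kind := Get | Put.

(* One operation issued by the client, with the real times of its events:
   t_iss : real time at which the operation is issued,
   t_snd : real time at which the request is sent (for a put, after the
           wait until clock > cgst; for a get this is irrelevant),
   t_ret : real time at which the quorum replies have been received, cgst
           is updated and (for a put) dt is set to the clock reading,
   replies : the cgst_i values carried by the replies of the quorum Q. *)
Record op_exec (R : realType) := OpExec {
  okind : op_kind;
  t_iss : R;
  t_snd : R;
  t_ret : R;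
  replies : seq R
}.

Record cstate (R : realType) := CState { dt : R; cgst : R }.

Definition init_state (R : realType) : cstate R := CState 0 0.

Definition seq_min (R : realType) (s : seq R) : R :=
  foldr Num.min (head 0 s) (behead s).

Definition step (R : realType) (clock : R -> R) (s : cstate R) (o : op_exec R)
  : cstate R :=
  match okind o with
  | Get => CState (dt s) (Num.max (cgst s) (seq_min (replies o)))
  | Put => CState (clock (t_ret o)) (Num.max (cgst s) (seq_min (replies o)))
  end.

Definition ts_op (R : realType) (clock : R -> R) (s : cstate R) (o : op_exec R)
  : R :=
  match okind o with
  | Get => Num.max (dt s) (cgst s)
  | Put => clock (t_snd o)
  end.

(* state of the client when the i-th operation (0-based) is issued *)
Definition state_before (R : realType) (clock : R -> R) (os : seq (op_exec R))
  (i : nat) : cstate R :=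
  foldl (step clock) (init_state R) (take i os).

(* a correct client execution, starting in state s; prev is the return time
   of the previous operation (if any) *)
Fixpoint valid_from (R : realType) (clock : R -> R) (s : cstate R)
  (prev : option R) (os : seq (op_exec R)) : Prop :=
  match os with
  | [::] => True
  | o :: os' =>
      (forall r, prev = Some r -> r < t_iss o) /\
      t_iss o <= t_snd o /\ t_snd o < t_ret o /\
      replies o != [::] /\
      (okind o = Put -> cgst s < clock (t_snd o)) /\
      valid_from clock (step clock s o) (Some (t_ret o)) os'
  end.

Definition valid_exec (R : realType) (clock : R -> R) (os : seq (op_exec R)) :=
  valid_from clock (init_state R) None os.

Definition dummy_op (R : realType) : op_exec R := OpExec Get 0 0 0 [::].

From mathcomp Require Import all_boot all_order all_algebra.
From mathcomp Require Import reals.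
Import Order.TTheory GRing.Theory Num.Theory.
Local Open Scope ring_scope.

(* Call max(dt, cgst) the level of a client state.  A get is timestamped
   with the current level; a put with a clock reading that exceeds cgst
   (the client waits for it) and exceeds dt (dt is either 0 or an earlier
   clock reading).  So every timestamp is at least the level at issue time.
   Conversely, when an operation returns the level is at least its
   timestamp: cgst never decreases, and a put sets dt to a later clock
   reading.  Timestamps and levels therefore interleave monotonically along
   the execution. *)

Section ClientTimestamps.
Variables (R : realType) (clock : R -> R).
Hypothesis clock_pos : forall t, 0 < clock t.
Hypothesis clock_incr : forall t t', t < t' -> clock t < clock t'.

Definition level (s : cstate R) : R := Num.max (dt s) (cgst s).

Definition dt_bound (s : cstate R) (prev : option R) : Prop :=
  dt s <= oapp clock 0 prev.

Lemma valid_from_tail {s prev o os} :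
  valid_from clock s prev (o :: os) ->
  valid_from clock (step clock s o) (Some (t_ret o)) os.
Proof. by case=> _ [_ [_ [_ [_ hv]]]]. Qed.

Lemma dt_lt_clock_snd {s prev o os} :
  valid_from clock s prev (o :: os) -> dt_bound s prev ->
  dt s < clock (t_snd o).
Proof.
case=> hprev [hiss _]; rewrite /dt_bound; case: prev hprev => [r|] hprev hdt.
- exact: le_lt_trans hdt (clock_incr _ _ (lt_le_trans (hprev r erefl) hiss)).
- exact: le_lt_trans hdt (clock_pos _).
Qed.

Lemma level_le_ts {s prev o os} :
  valid_from clock s prev (o :: os) -> dt_bound s prev ->
  level s <= ts_op clock s o.
Proof.
move=> hv hdt; have dt_lt := dt_lt_clock_snd hv hdt.
case: hv => _ [_ [_ [_ [hput _]]]].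
rewrite /level /ts_op; case: (okind o) hput => // hput.
by rewrite ge_max (ltW dt_lt) (ltW (hput erefl)).
Qed.

Lemma ts_le_level_step {s prev o os} :
  valid_from clock s prev (o :: os) -> ts_op clock s o <= level (step clock s o).
Proof.
case=> _ [_ [hret _]]; rewrite /level /ts_op /step.
case: (okind o) => /=.
- by rewrite ge_max !le_max !lexx ?orbT.
- by rewrite le_max (ltW (clock_incr _ _ hret)).
Qed.

Lemma dt_bound_step {s prev o os} :
  valid_from clock s prev (o :: os) -> dt_bound s prev ->
  dt_bound (step clock s o) (Some (t_ret o)).
Proof.
move=> hv hdt; have dt_lt := dt_lt_clock_snd hv hdt.
case: hv => _ [_ [hret _]]; rewrite /dt_bound /step.
case: (okind o) => //=.
exact: ltW (lt_trans dt_lt (clock_incr _ _ hret)).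
Qed.

Lemma level_le_ts_nth os : forall s prev j,
  valid_from clock s prev os -> dt_bound s prev -> (j < size os)%N ->
  level s <= ts_op clock (foldl (step clock) s (take j os)) (nth (dummy_op R) os j).
Proof.
elim: os => [|o os IH] s prev [|j] //= hv hdt hj; first exact: level_le_ts hv hdt.
apply: le_trans (level_le_ts hv hdt) _.
apply: le_trans (ts_le_level_step hv) _.
exact: IH (valid_from_tail hv) (dt_bound_step hv hdt) hj.
Qed.

Lemma ts_nth_mono os : forall s prev i j,
  valid_from clock s prev os -> dt_bound s prev -> (i < j)%N -> (j < size os)%N ->
  ts_op clock (foldl (step clock) s (take i os)) (nth (dummy_op R) os i)
  <= ts_op clock (foldl (step clock) s (take j os)) (nth (dummy_op R) os j).
Proof.
elim: os => [|o os IH] s prev [|i] [|j] //= hv hdt hij hj.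
- apply: le_trans (ts_le_level_step hv) _.
  exact: level_le_ts_nth (valid_from_tail hv) (dt_bound_step hv hdt) hj.
- exact: IH _ _ i j (valid_from_tail hv) (dt_bound_step hv hdt) hij hj.
Qed.

End ClientTimestamps.

Theorem lemma7 (R : realType) (clock : R -> R)
  (clock_pos : forall t, 0 < clock t)
  (clock_incr : forall t t', t < t' -> clock t < clock t')
  (os : seq (op_exec R)) (Hvalid : valid_exec clock os)
  (i j : nat) (Hij : (i < j)%N) (Hj : (j < size os)%N) :
  ts_op clock (state_before clock os i) (nth (dummy_op R) os i)
  <= ts_op clock (state_before clock os j) (nth (dummy_op R) os j).
Proof.
exact: (@ts_nth_mono R clock clock_pos clock_incr os (init_state R) None i j Hvalid (lexx 0) Hij Hj).
Qed.
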